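(* For every $n\ge2$ and all masses $m_1,\dots,m_n>0$, the $n$-body problem in ${\bf H}^2$ has no fixed points: there is no collisionless configuration ${\bf q}^0\in({\bf H}^2)^n$ such that the constant function ${\bf q}(t)\equiv{\bf q}^0$ solves the equations of motion.
   Context: The $n$-body problem in ${\bf H}^2$ (Weierstrass model): with the Lorentz inner product ${\bf a}\boxdot{\bf b}=a_xb_x+a_yb_y-a_zb_z$ on $\mathbb R^3$, ${\bf H}^2=\{(x,y,z): x^2+y^2-z^2=-1,\ z>0\}$. Bodies of masses $m_1,\dots,m_n>0$ have positions ${\bf q}_i=(x_i,y_i,z_i)\in{\bf H}^2$ and satisfy $$\ddot{\bf q}_i=\sum_{j\ne i}\frac{m_j[{\bf q}_j+({\bf q}_i\boxdot{\bf q}_j){\bf q}_i]}{[({\bf q}_i\boxdot{\bf q}_j)^2-1]^{3/2}}+(\dot{\bf q}_i\boxdot\dot{\bf q}_i){\bf q}_i,\qquad {\bf q}_i\boxdot{\bf q}_i=-1,\ \ {\bf q}_i\boxdot\dot{\bf q}_i=0,$$ $i=1,\dots,n$, defined only for collisionless configurations (${\bf q}_i\ne{\bf q}_j$, equivalently ${\bf q}_i\boxdot{\bf q}_j\ne-1$, for $i\ne j$). These come from the force function $\sum_{i<j}m_im_j\coth d({\bf q}_i,{\bf q}_j)$ with $d$ the hyperbolic distance $\cosh^{-1}(-{\bf q}_i\boxdot{\bf q}_j)$. *)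

From Stdlib Require Import Reals.
Open Scope R_scope.

Record V3 := mkV3 { vx : R; vy : R; vz : R }.

Definition vzero : V3 := mkV3 0 0 0.
Definition vadd (a b : V3) : V3 := mkV3 (vx a + vx b) (vy a + vy b) (vz a + vz b).
Definition vscale (c : R) (a : V3) : V3 := mkV3 (c * vx a) (c * vy a) (c * vz a).

Definition lor (a b : V3) : R := vx a * vx b + vy a * vy b - vz a * vz b.

Definition onH2 (p : V3) : Prop := lor p p = -1 /\ 0 < vz p.

Definition collisionless (n : nat) (q : nat -> V3) : Prop :=
  forall i j, (i < n)%nat -> (j < n)%nat -> i <> j -> q i <> q j.

Fixpoint vsum (f : nat -> V3) (n : nat) : V3 :=
  match n with
  | O => vzero
  | S k => vadd (vsum f k) (f k)
  end.

Definition force_term (m : nat -> R) (q : nat -> V3) (i j : nat) : V3 :=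
  vscale (m j / Rpower ((lor (q i) (q j)) ^ 2 - 1) (3 / 2))
         (vadd (q j) (vscale (lor (q i) (q j)) (q i))).

Definition force (n : nat) (m : nat -> R) (q : nat -> V3) (i : nat) : V3 :=
  vsum (fun j => if Nat.eq_dec j i then vzero else force_term m q i j) n.

Definition has_deriv (f f' : R -> V3) : Prop :=
  forall t, derivable_pt_lim (fun s => vx (f s)) t (vx (f' t)) /\
            derivable_pt_lim (fun s => vy (f s)) t (vy (f' t)) /\
            derivable_pt_lim (fun s => vz (f s)) t (vz (f' t)).

Definition is_solution (n : nat) (m : nat -> R) (q : nat -> R -> V3) : Prop :=
  exists v a : nat -> R -> V3,
    (forall i, (i < n)%nat -> has_deriv (q i) (v i) /\ has_deriv (v i) (a i)) /\
    (forall t,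
      collisionless n (fun i => q i t) /\
      forall i, (i < n)%nat ->
        onH2 (q i t) /\ lor (q i t) (v i t) = 0 /\
        a i t = vadd (force n m (fun j => q j t) i)
                     (vscale (lor (v i t) (v i t)) (q i t))).

From Stdlib Require Import Reals Lra Psatz.
Open Scope R_scope.

(* Suppose the constant curve q(t) = q0 solved the equations of motion.
   Then every velocity and every acceleration vanishes, so the equations
   reduce to  force_i(q0) = 0  for every body i.  Pick a body i whose
   z-coordinate is maximal.  By the reversed Cauchy-Schwarz inequality on the
   hyperboloid, q_i ⊡ q_j < -1 for every other body j, hence the z-component
   of  q_j + (q_i ⊡ q_j) q_i  is below  z_j - z_i <= 0, and each interaction
   term pulls body i strictly downwards.  Summing over the n-1 >= 1 other
   bodies, the z-component of force_i is strictly negative: contradiction. *)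

(* Lagrange-type identity behind the reversed Cauchy-Schwarz inequality on
   the hyperboloid x^2 + y^2 - z^2 = -1. *)
Lemma hyperboloid_identity (p q : V3) :
  lor p p = -1 -> lor q q = -1 ->
  (vz p * vz q) ^ 2 =
    (1 + vx p * vx q + vy p * vy q) ^ 2 + (vx p - vx q) ^ 2
    + (vy p - vy q) ^ 2 + (vx p * vy q - vx q * vy p) ^ 2.
Proof.
  destruct p as [x1 y1 z1], q as [x2 y2 z2]; unfold lor; cbn [vx vy vz].
  intros Hp Hq.
  replace ((z1 * z2) ^ 2) with ((z1 * z1) * (z2 * z2)) by ring.
  replace (z1 * z1) with (1 + x1 * x1 + y1 * y1) by lra.
  replace (z2 * z2) with (1 + x2 * x2 + y2 * y2) by lra.
  ring.
Qed.

(* Reversed Cauchy-Schwarz: distinct points of H^2 satisfy p ⊡ q < -1,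
   i.e. their hyperbolic distance arccosh(-p ⊡ q) is positive. *)
Lemma lor_lt_neg1 (p q : V3) : onH2 p -> onH2 q -> p <> q -> lor p q < -1.
Proof.
  intros [Hp Pz] [Hq Qz] Hne.
  pose proof (hyperboloid_identity p q Hp Hq) as Hid.
  destruct (Rlt_or_le (lor p q) (-1)) as [Hlt | Hge]; [exact Hlt | exfalso].
  (* If p ⊡ q >= -1 then z_p z_q <= 1 + x_p x_q + y_p y_q, which by the
     identity forces the x- and y-coordinates to agree, and then z too. *)
  assert (Hzz : vz p * vz q <= 1 + vx p * vx q + vy p * vy q)
    by (unfold lor in Hge; lra).
  assert (Hpos : 0 < vz p * vz q) by (apply Rmult_lt_0_compat; lra).
  assert (Hsq : (vz p * vz q) ^ 2 <= (1 + vx p * vx q + vy p * vy q) ^ 2) by nra.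
  pose proof (pow2_ge_0 (vx p - vx q)) as Sx.
  pose proof (pow2_ge_0 (vy p - vy q)) as Sy.
  pose proof (pow2_ge_0 (vx p * vy q - vx q * vy p)) as Sxy.
  assert (Ex : vx p = vx q).
  { apply Rminus_diag_uniq, Rsqr_0_uniq; unfold Rsqr; lra. }
  assert (Ey : vy p = vy q).
  { apply Rminus_diag_uniq, Rsqr_0_uniq; unfold Rsqr; lra. }
  assert (Ez : vz p = vz q).
  { unfold lor in Hp, Hq; rewrite Ex, Ey in Hp; nra. }
  apply Hne; destruct p, q; cbn in *; congruence.
Qed.

Lemma vz_vsum_nonpos (f : nat -> V3) (n : nat) :
  (forall j, (j < n)%nat -> vz (f j) <= 0) -> vz (vsum f n) <= 0.
Proof.
  induction n as [|n IH]; intros Hle; cbn; [lra|].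
  assert (vz (f n) <= 0) by (apply Hle; lia).
  assert (vz (vsum f n) <= 0) by (apply IH; intros; apply Hle; lia).
  lra.
Qed.

Lemma vz_vsum_neg (f : nat -> V3) (n : nat) (k : nat) :
  (forall j, (j < n)%nat -> vz (f j) <= 0) ->
  (k < n)%nat -> vz (f k) < 0 -> vz (vsum f n) < 0.
Proof.
  induction n as [|n IH]; intros Hle Hk Hneg; [lia|]; cbn.
  destruct (Nat.eq_dec k n) as [-> | Hkn].
  - assert (vz (vsum f n) <= 0)
      by (apply vz_vsum_nonpos; intros; apply Hle; lia).
    lra.
  - assert (vz (f n) <= 0) by (apply Hle; lia).
    assert (vz (vsum f n) < 0) by (apply IH; [intros; apply Hle; lia | lia | exact Hneg]).
    lra.
Qed.

Lemma exists_highest (q : nat -> V3) (n : nat) : (1 <= n)%nat ->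
  exists i, (i < n)%nat /\ forall j, (j < n)%nat -> vz (q j) <= vz (q i).
Proof.
  induction n as [|n IH]; intros Hn; [lia|].
  destruct (Nat.eq_dec n 0) as [-> | Hn0].
  - exists 0%nat; split; [lia|]; intros j Hj; replace j with 0%nat by lia; lra.
  - destruct IH as [i [Hi Hmax]]; [lia|].
    destruct (Rle_dec (vz (q n)) (vz (q i))) as [Hle | Hgt].
    + exists i; split; [lia|]; intros j Hj.
      destruct (Nat.eq_dec j n) as [-> | ]; [exact Hle | apply Hmax; lia].
    + exists n; split; [lia|]; intros j Hj.
      destruct (Nat.eq_dec j n) as [-> | ]; [lra|].
      assert (vz (q j) <= vz (q i)) by (apply Hmax; lia); lra.
Qed.

Lemma has_deriv_const (f f' : R -> V3) (c : V3) :
  (forall t, f t = c) -> has_deriv f f' -> forall t, f' t = vzero.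
Proof.
  intros Hc Hd t; destruct (Hd t) as [Dx [Dy Dz]].
  assert (Hzero : forall (g : R -> R) (k l : R),
             (forall s, g s = k) -> derivable_pt_lim g t l -> l = 0).
  { intros g k l Hg Dg.
    apply (uniqueness_limite g t); [exact Dg|].
    apply (derivable_pt_lim_ext (fun _ => k)); [intro s; now rewrite Hg|].
    apply derivable_pt_lim_const. }
  unfold vzero; destruct (f' t) as [x y z] eqn:E; cbn in *; f_equal.
  - apply (Hzero _ (vx c) _ (fun s => f_equal vx (Hc s)) Dx).
  - apply (Hzero _ (vy c) _ (fun s => f_equal vy (Hc s)) Dy).
  - apply (Hzero _ (vz c) _ (fun s => f_equal vz (Hc s)) Dz).
Qed.

(* Every other body j pulls the highest body i strictly downwards: the
   coefficient m_j / ((q_i ⊡ q_j)^2 - 1)^{3/2} is positive and the z-component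
   of q_j + (q_i ⊡ q_j) q_i is below z_j - z_i <= 0. *)
Lemma force_term_z_neg (m : nat -> R) (q : nat -> V3) (i j : nat) :
  0 < m j -> onH2 (q i) -> onH2 (q j) -> q i <> q j -> vz (q j) <= vz (q i) ->
  vz (force_term m q i j) < 0.
Proof.
  intros Hm Hi Hj Hne Hz; unfold force_term, vscale, vadd; cbn [vx vy vz].
  pose proof (lor_lt_neg1 _ _ Hi Hj Hne) as Hl.
  set (c := m j / Rpower (lor (q i) (q j) ^ 2 - 1) (3 / 2)).
  assert (Hc : 0 < c).
  { apply Rdiv_lt_0_compat; [exact Hm | apply exp_pos]. }
  destruct Hi as [_ Pi].
  assert (vz (q j) + lor (q i) (q j) * vz (q i) < 0) by nra.
  nra.
Qed.

Lemma force_z_neg_at_highest (n : nat) (m : nat -> R) (q : nat -> V3) (i : nat) :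
  (2 <= n)%nat ->
  (forall j, (j < n)%nat -> 0 < m j) ->
  (forall j, (j < n)%nat -> onH2 (q j)) ->
  collisionless n q ->
  (i < n)%nat -> (forall j, (j < n)%nat -> vz (q j) <= vz (q i)) ->
  vz (force n m q i) < 0.
Proof.
  intros Hn Hm HH Hc Hi Hmax.
  assert (Hterm : forall j, (j < n)%nat -> j <> i -> vz (force_term m q i j) < 0).
  { intros j Hj Hji; apply force_term_z_neg; auto. }
  set (k := if Nat.eq_dec i 0 then 1%nat else 0%nat).
  assert (Hk : (k < n)%nat /\ k <> i)
    by (unfold k; destruct (Nat.eq_dec i 0); split; lia).
  apply (vz_vsum_neg _ n k).
  - intros j Hj; destruct (Nat.eq_dec j i) as [_ | Hji]; cbn; [lra|].
    apply Rlt_le, Hterm; assumption.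
  - apply Hk.
  - destruct (Nat.eq_dec k i) as [Hki | _]; [now destruct Hk|].
    apply Hterm; apply Hk.
Qed.

Theorem mainTheorem12 :
  forall (n : nat) (m : nat -> R) (q0 : nat -> V3),
    (2 <= n)%nat ->
    (forall i, (i < n)%nat -> 0 < m i) ->
    (forall i, (i < n)%nat -> onH2 (q0 i)) ->
    collisionless n q0 ->
    ~ is_solution n m (fun i (_ : R) => q0 i).
Proof.
  intros n m q0 Hn Hm HH Hc [v [a [Hd Hsol]]].
  destruct (exists_highest q0 n) as [i [Hi Hmax]]; [lia|].
  destruct (Hd i Hi) as [Dq Dv].
  pose proof (has_deriv_const _ _ (q0 i) (fun _ => eq_refl) Dq) as Hv.
  pose proof (has_deriv_const _ _ vzero Hv Dv 0) as Ha.
  destruct (Hsol 0) as [_ Heq]; destruct (Heq i Hi) as [_ [_ Hmotion]].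
  rewrite Ha, (Hv 0) in Hmotion.
  apply (f_equal vz) in Hmotion; unfold vadd, vscale, lor, vzero in Hmotion; cbn in Hmotion.
  pose proof (force_z_neg_at_highest n m q0 i Hn Hm HH Hc Hi Hmax).
  change (fun j => q0 j) with q0 in Hmotion.
  lra.
Qed.
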